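(* Let $\mathcal{K}=\{1,\ldots,K\}$ be a set of users, and for each $k\in\mathcal{K}$ let $\gamma_k:\mathbb{R}_{>0}^K\to\mathbb{R}_{>0}$ be the uplink SINDR of user $k$ as a function of the transmit power vector $\boldsymbol{\rho}=[\rho_1,\ldots,\rho_K]^{\mathrm{T}}$, for fixed receivers. Suppose there exist power vectors $\boldsymbol{\rho}\succeq\boldsymbol{\rho}'$ (componentwise $\ge$, with $\boldsymbol{\rho}'$ having positive entries) such that $\gamma_k(\boldsymbol{\rho})<\gamma_k(\boldsymbol{\rho}')$ for all $k\in\mathcal{K}$. Then the transmit powers are in the quantization-distortion-dominated region of the non-monotonic SINDR, i.e., the SINDR functions cannot be of the unquantized form $\gamma_k(\boldsymbol{\rho})=G_k(\rho_k)/I_k(\boldsymbol{\rho})$ with $G_k(\rho_k)=g_k\rho_k$ ($g_k>0$) and $I_k$ a standard interference function; equivalently, for any such unquantized-form SINR functions and any $\boldsymbol{\rho}\succeq\boldsymbol{\rho}'$ there is at least one $k$ with $\gamma_k(\boldsymbol{\rho})\ge\gamma_k(\boldsymbol{\rho}')$.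
   Context: A standard interference function $I:\mathbb{R}_{\ge 0}^K\to\mathbb{R}_{>0}$ (Yates) satisfies positivity $I(\boldsymbol{\rho})>0$, monotonicity ($\boldsymbol{\rho}\succeq\boldsymbol{\rho}'\Rightarrow I(\boldsymbol{\rho})\ge I(\boldsymbol{\rho}')$) and scalability ($a>1\Rightarrow aI(\boldsymbol{\rho})>I(a\boldsymbol{\rho})$). In an unquantized system with fixed receivers, the SINR of user $k$ has the form (signal power linear in $\rho_k$)/(interference-plus-noise given by a standard interference function). The SINDR of user $k$ is called non-monotonic due to quantization distortion (QD), produced by 1-bit ADCs at the receivers, if for fixed interference and noise there is $\rho_k>\rho_k'$ with $\gamma_k(\rho_k)<\gamma_k(\rho_k')$; the ''QD-dominated region'' refers to transmit powers where the SINDR exhibits such non-monotonic behavior, which cannot occur for unquantized-form SINRs. *)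

From mathcomp Require Import all_boot all_order all_algebra.
Set Implicit Arguments. Unset Strict Implicit. Unset Printing Implicit Defensive.
Import Order.TTheory GRing.Theory Num.Theory.
Local Open Scope ring_scope.

Definition nonneg_vec (R : realFieldType) (K : nat) (x : 'I_K -> R) : Prop :=
  forall k, 0 <= x k.

Definition standard_interference (R : realFieldType) (K : nat)
    (I : ('I_K -> R) -> R) : Prop :=
  (forall rho, nonneg_vec rho -> 0 < I rho) /\
  (forall rho rho', nonneg_vec rho -> nonneg_vec rho' ->
     (forall k, rho' k <= rho k) -> I rho' <= I rho) /\
  (forall (a : R) rho, nonneg_vec rho -> 1 < a ->
     I (fun k => a * rho k) < a * I rho).

Definition sinr_unq (R : realFieldType) (K : nat) (g : 'I_K -> R)
    (I : 'I_K -> ('I_K -> R) -> R) (k : 'I_K) (rho : 'I_K -> R) : R :=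
  g k * rho k / I k rho.

From mathcomp Require Import all_boot all_order all_algebra.
Set Implicit Arguments. Unset Strict Implicit. Unset Printing Implicit Defensive.
Import Order.TTheory GRing.Theory Num.Theory.
Local Open Scope ring_scope.

(* Let k maximise the ratio a = rho_k / rho'_k, so that a >= 1 and
   rho <= a rho'.  Monotonicity and scalability of I_k give
   I_k(rho) <= I_k(a rho') <= a I_k(rho'), while the signal of user k grows
   exactly by the factor a; hence gamma_k(rho) >= gamma_k(rho'). *)

Section StandardInterference.

Variables (R : realFieldType) (K : nat) (I : ('I_K -> R) -> R).
Hypothesis std_I : standard_interference I.

Lemma standard_interference_gt0 rho : nonneg_vec rho -> 0 < I rho.
Proof. by case: std_I => pos _; apply: pos. Qed.

Lemma standard_interference_scale_le (a : R) rho :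
  nonneg_vec rho -> 1 <= a -> I (fun k => a * rho k) <= a * I rho.
Proof.
move=> rho_ge0; rewrite le_eqVlt => /orP[/eqP <- | a_gt1].
  case: std_I => _ [mono _]; rewrite mul1r.
  by apply: mono => // k; rewrite mul1r.
by case: std_I => _ [_ scal]; apply/ltW/scal.
Qed.

Lemma standard_interference_le_scale (a : R) rho rho' :
  nonneg_vec rho -> nonneg_vec rho' -> 1 <= a ->
  (forall k, rho k <= a * rho' k) -> I rho <= a * I rho'.
Proof.
move=> rho_ge0 rho'_ge0 a_ge1 rho_le.
have a_rho'_ge0 : nonneg_vec (fun k => a * rho' k).
  by move=> k; apply: mulr_ge0; [exact: le_trans ler01 a_ge1 | exact: rho'_ge0].
apply: le_trans (standard_interference_scale_le rho'_ge0 a_ge1).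
by case: std_I => _ [mono _]; apply: mono.
Qed.

End StandardInterference.

Lemma exists_max_ratio (R : realFieldType) (K : nat) (rho rho' : 'I_K -> R) :
  (0 < K)%N -> exists k, forall j, rho j / rho' j <= rho k / rho' k.
Proof.
move=> K_gt0; have [k _ k_max] := @arg_maxP _ R _ (Ordinal K_gt0) xpredT
  (fun j => rho j / rho' j) erefl.
by exists k => j; apply: k_max.
Qed.

Lemma sinr_unq_le_scale (R : realFieldType) (K : nat) (g : 'I_K -> R)
    (I : 'I_K -> ('I_K -> R) -> R) (k : 'I_K) (a : R) (rho rho' : 'I_K -> R) :
  0 <= g k -> 0 <= rho' k -> 0 < I k rho -> 0 < I k rho' ->
  rho k = a * rho' k -> I k rho <= a * I k rho' ->
  sinr_unq g I k rho' <= sinr_unq g I k rho.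
Proof.
move=> g_ge0 rho'_ge0 I_gt0 I'_gt0 rho_k I_le.
rewrite /sinr_unq ler_pdivrMr // mulrAC ler_pdivlMr // rho_k.
have -> : g k * (a * rho' k) * I k rho' = g k * rho' k * (a * I k rho').
  by rewrite -!mulrA [a * _]mulrCA.
by apply: ler_wpM2l => //; apply: mulr_ge0.
Qed.

Theorem theorem1 (R : realFieldType) (K : nat) (g : 'I_K -> R)
    (I : 'I_K -> ('I_K -> R) -> R) :
  (0 < K)%N ->
  (forall k, 0 < g k) ->
  (forall k, standard_interference (I k)) ->
  forall rho rho' : 'I_K -> R,
    (forall k, 0 < rho' k) ->
    (forall k, rho' k <= rho k) ->
    exists k, sinr_unq g I k rho' <= sinr_unq g I k rho.
Proof.
move=> K_gt0 g_gt0 std_I rho rho' rho'_gt0 rho'_le.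
have [k k_max] := exists_max_ratio rho rho' K_gt0.
exists k; set a := rho k / rho' k.
have rho'_ge0 : nonneg_vec rho' by move=> j; apply: ltW.
have rho_ge0 : nonneg_vec rho by move=> j; apply: le_trans (rho'_le j).
have rho_k : rho k = a * rho' k by rewrite mulrAC -mulrA divff ?mulr1 ?gt_eqF.
have a_ge1 : 1 <= a by rewrite ler_pdivlMr // mul1r.
have rho_le j : rho j <= a * rho' j by rewrite -ler_pdivrMr //; apply: k_max.
apply: (sinr_unq_le_scale (ltW (g_gt0 k)) (rho'_ge0 k)
  (standard_interference_gt0 (std_I k) rho_ge0)
  (standard_interference_gt0 (std_I k) rho'_ge0) rho_k).
exact: (standard_interference_le_scale (std_I k) rho_ge0 rho'_ge0 a_ge1 rho_le).
Qed.
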